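(* Let $(\Omega,\Sigma,\mu)$ be a finite measure space and let $X(\mu)\subseteq L^0(\mu)$ be a Banach space of measurable functions. Then there is an equivalent norm on $X(\mu)$ under which $X(\mu)$ is a Banach function space if and only if $X(\mu)$ is a Banach rectangular function space with the subsequence property.
   Context: $L^0(\mu)$ is the space of equivalence classes (modulo $\mu$-a.e. equality) of real $\Sigma$-measurable functions. A Banach space of measurable functions is a vector subspace of $L^0(\mu)$ with a complete norm. It is rectangular if for some $C>0$, $\chi_Af\in X(\mu)$ and $\|\chi_Af\|\le C\|f\|$ for all $f\in X(\mu)$, $A\in\Sigma$. Subsequence property: whenever $f_n,f\in X(\mu)$ and $f_n\to f$ in norm, some subsequence converges to $f$ $\mu$-a.e. A Banach function space is such a space which is an ideal of $L^0(\mu)$ (if $f\in L^0(\mu)$, $g\in X(\mu)$, $|f|\le|g|$, then $f\in X(\mu)$) and whose norm satisfies $\|f\|\le\|g\|$ whenever $|f|\le|g|$. *)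

From HB Require Import structures.
From mathcomp Require Import all_boot all_order all_algebra.
From mathcomp Require Import all_classical all_reals all_analysis.
Set Implicit Arguments. Unset Strict Implicit. Unset Printing Implicit Defensive.
Import Order.TTheory GRing.Theory Num.Theory.
Import numFieldNormedType.Exports.
Local Open Scope classical_set_scope.
Local Open Scope ring_scope.

(* An element of L^0(mu) (a class of measurable functions modulo a.e.
   equality) is represented by any of its measurable representatives.
   A vector subspace X of L^0(mu) is represented by the set S of all
   measurable representatives of its elements (so S is saturated under
   a.e. equality), and a norm on X by a function N : (T -> R) -> R which
   is invariant under a.e. equality on S (its values outside S are
   irrelevant). *)

Section BanachMeasurable.
Context d (T : measurableType d) (R : realType) (mu : {measure set T -> \bar R}).

Definition L0_subspace (S : set (T -> R)) : Prop :=
  [/\ (forall f, S f -> measurable_fun [set: T] f),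
      (forall f g, S f -> measurable_fun [set: T] g -> f = g %[ae mu] -> S g),
      S (fun=> 0),
      (forall f g, S f -> S g -> S (fun x => f x + g x)) &
      (forall (a : R) f, S f -> S (fun x => a * f x))].

Definition norm_on (S : set (T -> R)) (N : (T -> R) -> R) : Prop :=
  [/\ (forall f g, S f -> S g -> f = g %[ae mu] -> N f = N g),
      (forall f, S f -> (N f = 0 <-> f = (fun=> 0) %[ae mu])),
      (forall f g, S f -> S g -> N (fun x => f x + g x) <= N f + N g) &
      (forall (a : R) f, S f -> N (fun x => a * f x) = `|a| * N f)].

Definition complete_on (S : set (T -> R)) (N : (T -> R) -> R) : Prop :=
  forall u : nat -> T -> R, (forall n, S (u n)) ->
    (forall e : R, 0 < e -> exists M : nat, forall m n : nat,
        (M <= m)%N -> (M <= n)%N -> N (fun x => u m x - u n x) < e) ->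
    exists2 f, S f & (N (fun x => u n x - f x)) @[n --> \oo] --> (0 : R).

Definition banach_meas_space (S : set (T -> R)) (N : (T -> R) -> R) : Prop :=
  [/\ L0_subspace S, norm_on S N & complete_on S N].

Definition L0_ideal (S : set (T -> R)) : Prop :=
  forall f g : T -> R, measurable_fun [set: T] f -> S g ->
    {ae mu, forall x, `|f x| <= `|g x|} -> S f.

Definition lattice_norm (S : set (T -> R)) (N : (T -> R) -> R) : Prop :=
  forall f g, S f -> S g -> {ae mu, forall x, `|f x| <= `|g x|} -> N f <= N g.

Definition banach_function_space (S : set (T -> R)) (N : (T -> R) -> R) : Prop :=
  [/\ banach_meas_space S N, L0_ideal S & lattice_norm S N].

Definition rectangular (S : set (T -> R)) (N : (T -> R) -> R) : Prop :=
  exists C : R, 0 < C /\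
    forall f (A : set T), S f -> measurable A ->
      S (fun x => \1_A x * f x) /\ N (fun x => \1_A x * f x) <= C * N f.

Definition subsequence_property (S : set (T -> R)) (N : (T -> R) -> R) : Prop :=
  forall (u : nat -> T -> R) (f : T -> R), (forall n, S (u n)) -> S f ->
    (N (fun x => u n x - f x)) @[n --> \oo] --> (0 : R) ->
    exists phi : nat -> nat, {homo phi : m n / (m < n)%N >-> (m < n)%N} /\
      {ae mu, forall x, (u (phi n) x) @[n --> \oo] --> f x}.

Definition equivalent_norms (S : set (T -> R)) (N N' : (T -> R) -> R) : Prop :=
  exists c C : R, [/\ 0 < c, 0 < C &
    forall f, S f -> c * N f <= N' f /\ N' f <= C * N f].

End BanachMeasurable.

(* Only if: multiplication by an indicator does not increase |f|, so it is
   bounded for any lattice norm equivalent to N.  In a Banach function space,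
   choose a subsequence with N (u_(phi k) - f) <= 2^-k; the partial sums of
   v_k = |u_(phi k) - f| then converge in norm, and a norm limit of an
   increasing sequence dominates it a.e., so sum_k v_k(x) < oo and
   v_k(x) -> 0 for a.e. x.
   If: when |k| <= |g|, expand k/g in base 2 with digits +-1.  The partial
   sums are combinations of the functions (2 1_A - 1) g, which lie in S with
   norm <= (2C + 1) N g by rectangularity, so they form a Cauchy sequence; its
   norm limit is k, because a subsequence converges a.e. to it while the
   partial sums converge to k everywhere.  Hence S is an ideal of L^0 and
   N k <= 2 (2C + 1) N g, and N' f := sup {N k | |k| <= |f| a.e.} is an
   equivalent lattice norm for which S stays complete. *)

From HB Require Import structures.
From mathcomp Require Import all_boot all_order all_algebra.
From mathcomp Require Import all_classical all_reals all_analysis.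
From mathcomp Require Import measurable_realfun lra ring.
Import Order.TTheory GRing.Theory Num.Theory.
Import numFieldNormedType.Exports.
Local Open Scope classical_set_scope.
Local Open Scope ring_scope.

Section half_pow.
Variable R : realType.

Definition half_pow (n : nat) : R := 2^-1 ^+ n.

Lemma half_pow_gt0 n : 0 < half_pow n.
Proof. by rewrite exprn_gt0 // invr_gt0. Qed.

Lemma half_powS n : half_pow n = 2 * half_pow n.+1.
Proof. by rewrite /half_pow exprS mulrA divff ?mul1r // pnatr_eq0. Qed.

Lemma cvg_half_pow : half_pow n @[n --> \oo] --> 0.
Proof. by apply: cvg_expr; rewrite gtr0_norm ?invr_gt0 // invf_lt1 // ltr1n. Qed.

End half_pow.

Section real_facts.
Context {R : realType}.

Lemma cvg0_squeeze {a b : nat -> R} {K : R} :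
  (forall n, 0 <= a n <= K * b n) -> b n @[n --> \oo] --> 0 ->
  a n @[n --> \oo] --> 0.
Proof.
move=> ab b0.
apply: (squeeze_cvgr (f := fun=> 0) (h := fun n => K * b n)); first exact: nearW.
  exact: cvg_cst.
by rewrite -(mulr0 K); apply: cvgM => //; exact: cvg_cst.
Qed.

Lemma le_of_cvg0 {a b : R} {c : nat -> R} :
  (\forall n \near \oo, a <= b + c n) -> c n @[n --> \oo] --> 0 -> a <= b.
Proof.
move=> abc c0; rewrite -[b]addr0.
exact: (ler_cvg_to (cvg_cst a) (cvgD (cvg_cst b) c0)).
Qed.

Lemma fast_subsequence {a : nat -> R} : a n @[n --> \oo] --> 0 ->
  exists phi : nat -> nat, {homo phi : m n / (m < n)%N >-> (m < n)%N} /\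
    forall k, `|a (phi k)| < half_pow R k.
Proof.
move=> a0.
have /boolp.choice[M HM] :
    forall k, exists M, forall n, (M <= n)%N -> `|a n| < half_pow R k.
  by move=> k; have [M _ HM] := cvgr0_norm_lt _ a0 _ (half_pow_gt0 R k); exists M.
pose phi := fix phi k := if k is j.+1 then maxn (phi j).+1 (M j.+1) else M 0.
exists phi; split; last by case=> [|k]; apply: HM => //=; exact: leq_maxr.
by apply: homo_ltn => [y x z|i]; [exact: ltn_trans | exact: leq_maxl].
Qed.

Lemma increasing_cvgn {phi : nat -> nat} :
  {homo phi : m n / (m < n)%N >-> (m < n)%N} -> phi n @[n --> \oo] --> \oo.
Proof.
move=> phi_inc A [M _ HA]; exists M => // n /= Mn; apply: HA.
have phi_ge : forall n, (n <= phi n)%N.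
  by elim=> // m IH; apply: leq_ltn_trans IH _; exact: phi_inc.
exact: (leq_trans Mn (phi_ge n)).
Qed.

Lemma norm_double_sub_sgn (r g e : R) : `|r| <= `|g| ->
  (0 <= r * g -> e = 1) -> (r * g < 0 -> e = -1) -> `|2 * r - e * g| <= `|g|.
Proof.
move=> rg e1 e2; have [rg_sgn|rg_sgn] := lerP 0 (r * g);
  [rewrite (e1 rg_sgn) | rewrite (e2 rg_sgn)];
  rewrite ler_norml; move: rg; case: (lerP 0 g) => g0; case: (lerP 0 r) => r0;
  rewrite ?(ger0_norm g0) ?(ltr0_norm g0) ?(ger0_norm r0) ?(ltr0_norm r0) => rg;
  apply/andP; split; nra.
Qed.

Definition clamp (a k : R) := Num.max (- a) (Num.min a k).

Lemma norm_clamp_le (a k : R) : 0 <= a -> `|clamp a k| <= a.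
Proof.
move=> a0; rewrite /clamp ler_norml.
apply/andP; split; first by rewrite le_max lexx.
by rewrite ge_max lerNl ge_min; apply/andP; split; [lra | rewrite lexx].
Qed.

Lemma clamp_id (a k : R) : `|k| <= a -> clamp a k = k.
Proof.
rewrite ler_norml => /andP[ak ka].
by rewrite /clamp (min_r ka) (max_r ak).
Qed.

Lemma norm_sub_clamp_le (k a b : R) : `|k| <= `|a + b| -> `|k - clamp `|a| k| <= `|b|.
Proof.
move=> kab; have := ler_normD a b; have := normr_ge0 a; have := normr_ge0 b.
have /andP[kl kr] : - `|k| <= k <= `|k| by rewrite -ler_norml.
rewrite /clamp minEle maxEle => b0 a0 ab.
case: (lerP `|a| k) => h1; [case: (lerP (- `|a|) `|a|) | case: (lerP (- `|a|) k)];
  by move=> h2; rewrite ler_norml; apply/andP; split; lra.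
Qed.

End real_facts.

Lemma measurable_ge0 d (T : measurableType d) (R : realType) (h : T -> R) :
  measurable_fun setT h -> measurable [set x | 0 <= h x].
Proof.
move=> mh; have := mh measurableT _ (measurable_itv `[0, +oo[); rewrite setTI.
by congr measurable; apply/seteqP; split => x /=; rewrite in_itv /= andbT.
Qed.

Lemma measurable_clamp d (T : measurableType d) (R : realType) (f k : T -> R) :
  measurable_fun setT f -> measurable_fun setT k ->
  measurable_fun setT (fun x => clamp `|f x| (k x)).
Proof.
move=> mf mk; have mnf : measurable_fun setT (fun x => `|f x|).
  by apply: measurableT_comp => //; exact: normr_measurable.
apply: (measurable_maxr (f := fun x => - `|f x|) (g := fun x => Num.min `|f x| (k x))).
  by apply: measurableT_comp.
exact: (measurable_minr (f := fun x => `|f x|) (g := k)).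
Qed.

Section normed_subspace.
Context {d} {T : measurableType d} {R : realType} {mu : {measure set T -> \bar R}}
  {S : set (T -> R)} {N : (T -> R) -> R}.
Hypotheses (HS : L0_subspace mu S) (HN : norm_on mu S N).

Lemma S_meas {f} : S f -> measurable_fun setT f.
Proof. by case: HS => H *; exact: H. Qed.

Lemma S_ae {f g} : S f -> measurable_fun setT g -> f = g %[ae mu] -> S g.
Proof. by case: HS => _ H _ _ _ Sf mg fg; exact: (H f g Sf mg fg). Qed.

Lemma S_0 : S (fun=> 0).
Proof. by case: HS. Qed.

Lemma S_D {f g} : S f -> S g -> S (fun x => f x + g x).
Proof. by case: HS => _ _ _ H *; exact: H. Qed.

Lemma S_Z a {f} : S f -> S (fun x => a * f x).
Proof. by case: HS => _ _ _ _ H *; exact: H. Qed.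

Lemma S_ext {f g} : S f -> f =1 g -> S g.
Proof. by move=> Sf /funext <-. Qed.

Lemma S_B {f g} : S f -> S g -> S (fun x => f x - g x).
Proof.
by move=> Sf Sg; apply: S_ext (S_D Sf (S_Z (-1) Sg)) _ => x; rewrite mulN1r.
Qed.

Lemma N_ae {f g} : S f -> S g -> f = g %[ae mu] -> N f = N g.
Proof. by case: HN => H *; exact: H. Qed.

Lemma N_eq0 {f} : S f -> (N f = 0 <-> f = (fun=> 0) %[ae mu]).
Proof. by case: HN => _ H *; exact: H. Qed.

Lemma N_D {f g} : S f -> S g -> N (fun x => f x + g x) <= N f + N g.
Proof. by case: HN => _ _ H *; exact: H. Qed.

Lemma N_Z a {f} : S f -> N (fun x => a * f x) = `|a| * N f.
Proof. by case: HN => _ _ _ H *; exact: H. Qed.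

Lemma N_ext {f g} : f =1 g -> N f = N g.
Proof. by move/funext->. Qed.

Lemma N_ge0 {f} : S f -> 0 <= N f.
Proof.
move=> Sf; have := N_D Sf (S_Z (-1) Sf); rewrite N_Z // normrN1 mul1r.
rewrite (N_ext (g := fun x => 0 * f x)) ?N_Z // => [|x]; last by rewrite mulN1r mul0r subrr.
by rewrite normr0 mul0r; lra.
Qed.

Lemma N_B {f g} : S f -> S g -> N (fun x => f x - g x) <= N f + N g.
Proof.
move=> Sf Sg.
rewrite (N_ext (g := fun x => f x + -1 * g x)) => [|x]; last by rewrite mulN1r.
apply: le_trans (N_D Sf (S_Z (-1) Sg)) _.
by rewrite N_Z // normrN1 mul1r.
Qed.

Lemma N_subC {f g} : S f -> S g -> N (fun x => f x - g x) = N (fun x => g x - f x).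
Proof.
move=> Sf Sg; rewrite (N_ext (g := fun x => -1 * (g x - f x))) => [|x].
  by rewrite N_Z ?normrN1 ?mul1r //; exact: S_B.
by rewrite mulN1r opprB.
Qed.

Lemma N_sub_trans {f g h} : S f -> S g -> S h ->
  N (fun x => f x - h x) <= N (fun x => f x - g x) + N (fun x => g x - h x).
Proof.
move=> Sf Sg Sh; apply: le_trans (N_D (S_B Sf Sg) (S_B Sg Sh)).
by rewrite (N_ext (g := fun x => (f x - g x) + (g x - h x))) // => x; rewrite addrA subrK.
Qed.

Section dyadic_increments.
Context {u : nat -> T -> R} {B : R}.
Hypotheses (Su : forall n, S (u n)) (B0 : 0 <= B)
  (u_step : forall n, N (fun x => u n.+1 x - u n x) <= B * half_pow R n).

Lemma dyadic_increments_le {m n} : (m <= n)%N ->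
  N (fun x => u n x - u m x) <= 2 * B * half_pow R m.
Proof.
move=> /subnKC <-; set j := (n - m)%N.
suff : N (fun x => u (m + j)%N x - u m x) <= 2 * B * (half_pow R m - half_pow R (m + j)).
  by move=> /le_trans; apply; have := mulr_ge0 B0 (ltW (half_pow_gt0 R (m + j))); lra.
elim: j => [|j IH].
  rewrite addn0 subrr mulr0 (N_ext (g := fun x => 0 * u m x)) => [|x].
    by rewrite N_Z ?normr0 ?mul0r.
  by rewrite subrr mul0r.
apply: le_trans (N_sub_trans (Su _) (Su (m + j)%N) (Su m)) _.
move: (u_step (m + j)) IH; rewrite addnS (half_powS R (m + j)); lra.
Qed.

Lemma dyadic_increments_cauchy (e : R) : 0 < e -> exists M, forall m n,
  (M <= m)%N -> (M <= n)%N -> N (fun x => u m x - u n x) < e.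
Proof.
move=> e0; have pos : 0 < e / (2 * B + 1) by apply: divr_gt0; have := B0; lra.
have [M _ HM] := cvgr0_norm_lt _ (cvg_half_pow R) _ pos.
have key m n : (M <= n)%N -> (n <= m)%N -> N (fun x => u m x - u n x) < e.
  move=> Mn nm; apply: le_lt_trans (dyadic_increments_le nm) _.
  have := HM n Mn; rewrite gtr0_norm ?half_pow_gt0 // ltr_pdivlMr; last by have := B0; lra.
  by have := half_pow_gt0 R n; have := B0; nra.
exists M => m n Mm Mn; case: (leqP n m) => nm; first exact: key.
by rewrite N_subC //; apply: key => //; exact: ltnW.
Qed.

End dyadic_increments.
End normed_subspace.

Section banach_function_space.
Context {d} {T : measurableType d} {R : realType} {mu : {measure set T -> \bar R}}
  {S : set (T -> R)} {N : (T -> R) -> R}.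
Hypotheses (HS : L0_subspace mu S) (HN : norm_on mu S N) (Hc : complete_on S N)
  (HI : L0_ideal mu S) (HL : lattice_norm mu S N).

Lemma ideal_normr {f} : S f -> S (fun x => `|f x|) /\ N (fun x => `|f x|) <= N f.
Proof.
move=> Sf; have dom : {ae mu, forall x, `| `|f x| | <= `|f x|}.
  by apply: aeW => x; rewrite normr_id.
have mf : measurable_fun setT (fun x => `|f x|).
  by apply: measurableT_comp => //; exact (S_meas HS Sf).
have Sf' := HI _ _ mf Sf dom.
by split=> //; exact: (HL _ _ Sf' Sf dom).
Qed.

Lemma ae_le_norm_limit {G : nat -> T -> R} {F : T -> R} :
  (forall n, S (G n)) -> S F ->
  (forall x, {homo G ^~ x : m n / (m <= n)%N >-> m <= n}) ->
  N (fun x => G n x - F x) @[n --> \oo] --> 0 ->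
  forall m, {ae mu, forall x, G m x <= F x}.
Proof.
move=> SG SF G_mono GF m.
pose h x := Num.max (G m x - F x) 0.
have SGF := S_B HS (SG m) SF.
have h_le p : (m <= p)%N -> forall x, `|h x| <= `|G p x - F x|.
  move=> mp x; rewrite /h maxEle.
  case: (lerP (G m x - F x) 0) => hx; rewrite ?normr0 ?normr_ge0 //.
  by have Gmp := G_mono x _ _ mp; rewrite !ger0_norm; lra.
have Sh : S h.
  apply: (HI _ _ _ SGF (aeW _ (h_le m (leqnn m)))).
  exact: (measurable_maxr (S_meas HS SGF) (measurable_cst _)).
have Nh0 : N h = 0.
  apply/eqP; rewrite eq_le (N_ge0 HS HN Sh) andbT.
  apply: (le_of_cvg0 _ GF); exists m => // p /= mp; rewrite add0r.
  exact: (HL _ _ Sh (S_B HS (SG p) SF) (aeW _ (h_le p mp))).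
apply: filterS ((N_eq0 HN Sh).1 Nh0) => x /(_ I).
rewrite /h maxEle; case: (lerP (G m x - F x) 0) => hx h0; first lra.
by move: hx; rewrite h0 ltxx.
Qed.

Lemma ae_cvg0_of_dyadic_norms {v : nat -> T -> R} :
  (forall k, S (v k)) -> (forall k x, 0 <= v k x) ->
  (forall k, N (v k) <= half_pow R k) ->
  {ae mu, forall x, v k x @[k --> \oo] --> 0}.
Proof.
move=> Sv v_ge0 Nv.
pose G n x := series (v ^~ x) n.
have GS n x : G n.+1 x = G n x + v n x by rewrite /G /series /= big_nat_recr.
have SG n : S (G n).
  elim: n => [|n IH].
    by apply: S_ext (S_0 HS) _ => x; rewrite /G /series /= big_geq.
  by apply: S_ext (S_D HS IH (Sv n)) _ => x; rewrite GS.
have G_step n : N (fun x => G n.+1 x - G n x) <= 1 * half_pow R n.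
  by rewrite mul1r (N_ext (g := v n)) // => x; rewrite GS addrAC subrr add0r.
have G_mono x : {homo G ^~ x : m n / (m <= n)%N >-> m <= n}.
  by apply: nondecreasing_series => k _ _; exact: v_ge0.
have [F SF GF] := Hc G SG (dyadic_increments_cauchy HS HN SG ler01 G_step).
apply: filterS (ae_foralln (ae_le_norm_limit SG SF G_mono GF)) => x GxF.
apply: cvg_series_cvg_0; apply: nondecreasing_is_cvgn; first exact: G_mono.
by exists (F x) => _ [n _ <-]; exact: GxF.
Qed.

Lemma bfs_subsequence_property : subsequence_property mu S N.
Proof.
move=> u f Su Sf uf.
have [phi [phi_inc uf_fast]] := fast_subsequence uf.
exists phi; split => //.
have Suf k := S_B HS (Su (phi k)) Sf.
have Sv k := (ideal_normr (Suf k)).1.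
have Nv k : N (fun x => `|u (phi k) x - f x|) <= half_pow R k.
  apply: le_trans (ideal_normr (Suf k)).2 (ltW _).
  by have := uf_fast k; rewrite /= ger0_norm // (N_ge0 HS HN (Suf k)).
apply: filterS (ae_cvg0_of_dyadic_norms Sv (fun k x => normr_ge0 _) Nv) => x.
by move/norm_cvg0; rewrite subr_cvg0.
Qed.

End banach_function_space.

Section rectangular_subsequence.
Context {d} {T : measurableType d} {R : realType} {mu : {measure set T -> \bar R}}
  {S : set (T -> R)} {N : (T -> R) -> R}.
Hypotheses (HS : L0_subspace mu S) (HN : norm_on mu S N) (Hc : complete_on S N)
  (Hsub : subsequence_property mu S N).
Context {C : R}.
Hypotheses (C_gt0 : 0 < C) (HC : forall f (A : set T), S f -> measurable A ->
  S (fun x => \1_A x * f x) /\ N (fun x => \1_A x * f x) <= C * N f).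

Definition sgn_indic (A : set T) (x : T) : R := 2 * \1_A x - 1.

Lemma sgn_indicE (A : set T) x : sgn_indic A x = if x \in A then 1 else -1.
Proof. by rewrite /sgn_indic indicE; case: (x \in A) => /=; ring. Qed.

Lemma sgn_indic_measurable (A : set T) : measurable A -> measurable_fun setT (sgn_indic A).
Proof.
by move=> mA; apply: measurable_funB => //; apply: measurable_funM => //.
Qed.

Lemma sgn_indic_mul {g} {A : set T} : S g -> measurable A ->
  S (fun x => sgn_indic A x * g x) /\
  N (fun x => sgn_indic A x * g x) <= (2 * C + 1) * N g.
Proof.
move=> Sg mA; have [S1 N1] := HC g A Sg mA.
have S2 := S_Z HS 2 S1.
have E : (fun x => 2 * (\1_A x * g x) - g x) =1 (fun x => sgn_indic A x * g x).
  by move=> x; rewrite /sgn_indic mulrBl mulrA mul1r.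
split; first exact: (S_ext (S_B HS S2 Sg) E).
rewrite -(N_ext E); apply: le_trans (N_B HS HN S2 Sg) _.
rewrite (N_Z HN) // ger0_norm //.
by have := N_ge0 HS HN Sg; have := C_gt0; nra.
Qed.

Section binary_expansion.
Context {g k : T -> R}.
Hypotheses (Sg : S g) (mk : measurable_fun setT k) (k_le_g : forall x, `|k x| <= `|g x|).

Definition same_sign (r : T -> R) : set T := [set x | 0 <= r x * g x].

(* [approx n] is [g] times the first [n] signed binary digits of [k / g];
   [remainder n] is [2 ^ n (k - approx n)] (see [k_approx]). *)
Fixpoint remainder n : T -> R :=
  if n is m.+1 then
    fun x => 2 * remainder m x - sgn_indic (same_sign (remainder m)) x * g x
  else k.

Fixpoint approx n : T -> R :=
  if n is m.+1 then
    fun x => approx m x + half_pow R n * (sgn_indic (same_sign (remainder m)) x * g x)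
  else fun=> 0.

Lemma same_sign_measurable {r} : measurable_fun setT r -> measurable (same_sign r).
Proof.
by move=> mr; apply: measurable_ge0; apply: measurable_funM => //; exact (S_meas HS Sg).
Qed.

Lemma remainder_measurable n : measurable_fun setT (remainder n).
Proof.
elim: n => [|n IH] //=.
apply: measurable_funB; first exact: measurable_funM.
apply: measurable_funM; last exact (S_meas HS Sg).
exact/sgn_indic_measurable/same_sign_measurable.
Qed.

Lemma remainder_le n x : `|remainder n x| <= `|g x|.
Proof.
elim: n => [|n IH] /=; first exact: k_le_g.
apply: norm_double_sub_sgn IH _ _ => rg; rewrite sgn_indicE; first by rewrite mem_set.
by rewrite memNset // => /(lt_le_trans rg); rewrite ltxx.
Qed.

Lemma k_approx n x : k x = approx n x + half_pow R n * remainder n x.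
Proof.
elim: n => [|n IH] /=; first by rewrite /half_pow expr0 mul1r add0r.
by rewrite IH (half_powS R n); ring.
Qed.

Lemma S_approx n : S (approx n).
Proof.
elim: n => [|n IH] /=; first exact: (S_0 HS).
have [S1 _] := sgn_indic_mul Sg (same_sign_measurable (remainder_measurable n)).
exact (S_D HS IH (S_Z HS (half_pow R n.+1) S1)).
Qed.

Lemma bound_ge0 : 0 <= (2 * C + 1) * N g.
Proof. by have := N_ge0 HS HN Sg; have := C_gt0; nra. Qed.

Lemma approx_step n :
  N (fun x => approx n.+1 x - approx n x) <= (2 * C + 1) * N g * half_pow R n.
Proof.
have [S1 N1] := sgn_indic_mul Sg (same_sign_measurable (remainder_measurable n)).
rewrite (N_ext (g := fun x =>
  half_pow R n.+1 * (sgn_indic (same_sign (remainder n)) x * g x))) => [|x]; last first.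
  by rewrite /= addrAC subrr add0r.
rewrite (N_Z HN) // ger0_norm ?(ltW (half_pow_gt0 _ _)) // (half_powS R n).
have hp0 := half_pow_gt0 R n.+1; have B0 := bound_ge0.
by have := ler_wpM2l (ltW hp0) N1; nra.
Qed.

Lemma approx_cvg x : approx n x @[n --> \oo] --> k x.
Proof.
apply/subr_cvg0/norm_cvg0P; apply: (cvg0_squeeze (K := `|g x|) _ (cvg_half_pow R)) => n.
have -> : approx n x - k x = - (half_pow R n * remainder n x).
  by rewrite (k_approx n x); ring.
rewrite normr_ge0 normrN normrM gtr0_norm ?half_pow_gt0 //=.
by have := remainder_le n x; have := half_pow_gt0 R n; nra.
Qed.

Lemma dominated_mem_everywhere : S k /\ N k <= 2 * ((2 * C + 1) * N g).
Proof.
have [F SF approxF] :=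
  Hc approx S_approx (dyadic_increments_cauchy HS HN S_approx bound_ge0 approx_step).
have [phi [phi_inc approx_phiF]] := Hsub approx F S_approx SF approxF.
have Fk : F = k %[ae mu].
  apply: filterS approx_phiF => x approxFx _.
  have approx_phik : approx (phi n) x @[n --> \oo] --> k x.
    exact: (cvg_comp _ _ (increasing_cvgn phi_inc) (approx_cvg x)).
  exact: (cvg_unique _ approxFx approx_phik).
have Sk := S_ae HS SF mk Fk.
split => //; rewrite -(N_ae HN SF Sk Fk).
apply: (le_of_cvg0 _ approxF); apply: nearW => n.
rewrite (N_ext (g := fun x => approx n x + (F x - approx n x))) => [|x]; last first.
  by rewrite addrC subrK.
apply: le_trans (N_D HN (S_approx n) (S_B HS SF (S_approx n))) _.
rewrite (N_subC HS HN SF (S_approx n)) lerD2r.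
have := dyadic_increments_le HS HN S_approx bound_ge0 approx_step (leq0n n).
by rewrite /half_pow expr0 mulr1 (N_ext (g := approx n)) // => x; rewrite subr0.
Qed.

End binary_expansion.

Definition dom_const := 2 * (2 * C + 1).

Lemma dom_const_gt0 : 0 < dom_const.
Proof. by rewrite /dom_const; have := C_gt0; lra. Qed.

Lemma dominated_mem {g k : T -> R} : S g -> measurable_fun setT k ->
  {ae mu, forall x, `|k x| <= `|g x|} -> S k /\ N k <= dom_const * N g.
Proof.
move=> Sg mk k_le_g.
have mk' : measurable_fun setT (fun x => clamp `|g x| (k x)).
  by apply: measurable_clamp => //; exact (S_meas HS Sg).
have [Sk' Nk'] :=
  dominated_mem_everywhere Sg mk' (fun x => norm_clamp_le _ _ (normr_ge0 (g x))).
have k'k : (fun x => clamp `|g x| (k x)) = k %[ae mu].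
  by apply: filterS k_le_g => x /clamp_id kx _.
have Sk := S_ae HS Sk' mk k'k.
by split => //; rewrite -(N_ae HN Sk' Sk k'k) /dom_const -mulrA.
Qed.

Lemma ideal_of_rectangular_subsequence : L0_ideal mu S.
Proof. by move=> f g mf Sg fg; exact: (dominated_mem Sg mf fg).1. Qed.

Definition dominated_by (f : T -> R) : set (T -> R) :=
  [set k | S k /\ {ae mu, forall x, `|k x| <= `|f x|}].

Definition lattice_renorm (f : T -> R) : R := sup (N @` dominated_by f).

Lemma renorm_ub {f} : S f -> ubound (N @` dominated_by f) (dom_const * N f).
Proof.
move=> Sf _ [k [Sk kf] <-].
by apply: (dominated_mem Sf _ kf).2; exact (S_meas HS Sk).
Qed.

Lemma N_le_renorm_dominated {f k} : S f -> S k ->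
  {ae mu, forall x, `|k x| <= `|f x|} -> N k <= lattice_renorm f.
Proof.
move=> Sf Sk kf; apply: ub_le_sup; last by exists k.
by exists (dom_const * N f); exact: renorm_ub.
Qed.

Lemma renorm_le_ub {f} (b : R) : S f ->
  (forall k, S k -> {ae mu, forall x, `|k x| <= `|f x|} -> N k <= b) ->
  lattice_renorm f <= b.
Proof.
move=> Sf kb; apply: ge_sup; first by exists (N f), f; split => //; exact: aeW.
by move=> _ [k [Sk kf] <-]; exact: kb.
Qed.

Lemma N_le_renorm {f} : S f -> N f <= lattice_renorm f.
Proof. by move=> Sf; apply: N_le_renorm_dominated => //; exact: aeW. Qed.

Lemma renorm_le {f} : S f -> lattice_renorm f <= dom_const * N f.
Proof.
by move=> Sf; apply: renorm_le_ub => // k Sk kf; apply: (renorm_ub Sf); exists k.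
Qed.

Lemma renorm_ge0 {f} : S f -> 0 <= lattice_renorm f.
Proof. by move=> Sf; apply: le_trans (N_ge0 HS HN Sf) (N_le_renorm Sf). Qed.

Lemma renorm_ae {f g} : S f -> S g -> f = g %[ae mu] -> lattice_renorm f = lattice_renorm g.
Proof.
move=> Sf Sg fg; apply/eqP; rewrite eq_le; apply/andP; split.
  apply: renorm_le_ub => // k Sk kf; apply: N_le_renorm_dominated => //.
  by apply: filterS2 kf fg => x kfx /(_ I) <-.
apply: renorm_le_ub => // k Sk kg; apply: N_le_renorm_dominated => //.
by apply: filterS2 kg fg => x kgx /(_ I) ->.
Qed.

Lemma renorm_eq0 {f} : S f -> (lattice_renorm f = 0 <-> f = (fun=> 0) %[ae mu]).
Proof.
move=> Sf; rewrite -(N_eq0 HN Sf); split => [f0|Nf0].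
  by apply/eqP; rewrite eq_le (N_ge0 HS HN Sf) andbT -f0 N_le_renorm.
apply/eqP; rewrite eq_le renorm_ge0 // andbT.
by apply: le_trans (renorm_le Sf) _; rewrite Nf0 mulr0.
Qed.

Lemma renormD {f g} : S f -> S g ->
  lattice_renorm (fun x => f x + g x) <= lattice_renorm f + lattice_renorm g.
Proof.
move=> Sf Sg; apply: renorm_le_ub => [|k Sk kfg]; first exact: (S_D HS Sf Sg).
(* Riesz decomposition: [k1] is dominated by [f] and [k - k1] by [g]. *)
pose k1 x := clamp `|f x| (k x).
have mk1 : measurable_fun setT k1.
  by apply: measurable_clamp; [exact (S_meas HS Sf) | exact (S_meas HS Sk)].
have k1f x : `|k1 x| <= `|f x| by exact: norm_clamp_le.
have Sk1 : S k1 := (dominated_mem Sf mk1 (aeW _ k1f)).1.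
rewrite (N_ext (g := fun x => k1 x + (k x - k1 x))) => [|x]; last by rewrite addrC subrK.
apply: le_trans (N_D HN Sk1 (S_B HS Sk Sk1)) _; apply: lerD.
  exact: (N_le_renorm_dominated Sf Sk1 (aeW _ k1f)).
apply: (N_le_renorm_dominated Sg (S_B HS Sk Sk1)).
by apply: filterS kfg => x; exact: norm_sub_clamp_le.
Qed.

Lemma renormZ_le (a : R) {f} : S f ->
  lattice_renorm (fun x => a * f x) <= `|a| * lattice_renorm f.
Proof.
move=> Sf; apply: renorm_le_ub => [|k Sk kaf]; first exact: (S_Z HS a Sf).
have [a0|a0] := eqVneq a 0.
  rewrite a0 normr0 mul0r; suff /(N_eq0 HN Sk) -> : k = (fun=> 0) %[ae mu] by [].
  by apply: filterS kaf => x; rewrite a0 mul0r normr0 normr_le0 => /eqP.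
rewrite (N_ext (g := fun x => a * (a^-1 * k x))) => [|x]; last by rewrite mulVKf.
rewrite (N_Z HN); last exact: (S_Z HS _ Sk).
apply: ler_wpM2l => //.
apply: (N_le_renorm_dominated Sf (S_Z HS _ Sk)).
apply: filterS kaf => x kafx.
by rewrite normrM normfV ler_pdivrMl ?normr_gt0 // -normrM.
Qed.

Lemma renormZ (a : R) {f} : S f ->
  lattice_renorm (fun x => a * f x) = `|a| * lattice_renorm f.
Proof.
move=> Sf; apply/eqP; rewrite eq_le renormZ_le //=.
have [->|a0] := eqVneq a 0.
  by rewrite normr0 mul0r renorm_ge0 //; exact: (S_Z HS 0 Sf).
have := renormZ_le a^-1 (S_Z HS a Sf).
rewrite (_ : (fun x => a^-1 * (a * f x)) = f); last by apply/funext => x; rewrite mulKf.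
by rewrite normrV ?unitfE // -ler_pdivlMl ?normr_gt0 // mulrC.
Qed.

Lemma renorm_norm_on : norm_on mu S lattice_renorm.
Proof.
split => [f g|f|f g|a f].
- exact: renorm_ae.
- exact: renorm_eq0.
- exact: renormD.
- exact: renormZ.
Qed.

Lemma renorm_complete : complete_on S lattice_renorm.
Proof.
move=> u Su u_cauchy.
have [F SF uF] : exists2 F, S F & N (fun x => u n x - F x) @[n --> \oo] --> 0.
  apply: (Hc _ Su) => e e0; have [M HM] := u_cauchy e e0.
  exists M => m n Mm Mn; apply: le_lt_trans (HM m n Mm Mn).
  exact: (N_le_renorm (S_B HS (Su m) (Su n))).
exists F => //; apply: (cvg0_squeeze (K := dom_const) _ uF) => n.
by rewrite renorm_ge0 ?renorm_le //; exact: (S_B HS (Su n) SF).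
Qed.

Lemma renorm_lattice : lattice_norm mu S lattice_renorm.
Proof.
move=> f g Sf Sg fg; apply: renorm_le_ub => // k Sk kf.
by apply: N_le_renorm_dominated => //; apply: filterS2 kf fg => x; exact: le_trans.
Qed.

Lemma renorm_equiv : equivalent_norms S N lattice_renorm.
Proof.
exists 1, dom_const; split => //; first exact: dom_const_gt0.
by move=> f Sf; rewrite mul1r N_le_renorm ?renorm_le.
Qed.

Lemma renorm_banach_function_space : banach_function_space mu S lattice_renorm.
Proof.
split; last exact: renorm_lattice.
  by split; [exact: HS | exact: renorm_norm_on | exact: renorm_complete].
exact: ideal_of_rectangular_subsequence.
Qed.

Lemma exists_equivalent_bfs_norm : exists N' : (T -> R) -> R,
  norm_on mu S N' /\ equivalent_norms S N N' /\ banach_function_space mu S N'.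
Proof.
exists lattice_renorm; split; first exact: renorm_norm_on.
by split; [exact: renorm_equiv | exact: renorm_banach_function_space].
Qed.

End rectangular_subsequence.

Section equivalent_norms.
Context {d} {T : measurableType d} {R : realType} {mu : {measure set T -> \bar R}}
  {S : set (T -> R)} {N N' : (T -> R) -> R}.
Hypotheses (HS : L0_subspace mu S) (HN' : norm_on mu S N') (HNN' : equivalent_norms S N N').

Lemma rectangular_of_lattice_equiv :
  L0_ideal mu S -> lattice_norm mu S N' -> rectangular S N.
Proof.
move=> HI HL; have [c [C [c0 C0 cNC]]] := HNN'.
exists (C / c); split => [|f A Sf mA]; first exact: divr_gt0.
have mAf : measurable_fun setT (fun x => \1_A x * f x).
  by apply: measurable_funM; [exact: measurable_indic | exact (S_meas HS Sf)].
have Af_le x : `|\1_A x * f x| <= `|f x|.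
  by rewrite indicE; case: (x \in A); rewrite ?mul1r ?mul0r ?normr0.
have SAf := HI _ _ mAf Sf (aeW _ Af_le).
split => //; have [cN _] := cNC _ SAf; have [_ NC] := cNC _ Sf.
have := HL _ _ SAf Sf (aeW _ Af_le).
by rewrite mulrAC ler_pdivlMr //; lra.
Qed.

Lemma subsequence_property_equiv :
  subsequence_property mu S N' -> subsequence_property mu S N.
Proof.
move=> Hsub u f Su Sf uf; apply: Hsub => //.
have [c [C [_ _ cNC]]] := HNN'.
apply: (cvg0_squeeze (K := C) _ uf) => n; have Suf := S_B HS (Su n) Sf.
by rewrite (N_ge0 HS HN' Suf) (cNC _ Suf).2.
Qed.

End equivalent_norms.

Theorem corollary4p2 (d : measure_display) (T : measurableType d) (R : realType)
  (mu : {measure set T -> \bar R}) (mu_fin : (mu [set: T] < +oo)%E)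
  (S : set (T -> R)) (N : (T -> R) -> R) :
  banach_meas_space mu S N ->
  ((exists N' : (T -> R) -> R,
      norm_on mu S N' /\ equivalent_norms S N N' /\ banach_function_space mu S N')
   <-> (rectangular S N /\ subsequence_property mu S N)).
Proof.
case=> HS HN Hc; split.
- case=> N' [HN' [HNN' [[_ _ Hc'] HI HL]]]; split.
    exact: (rectangular_of_lattice_equiv HS HNN' HI HL).
  apply: (subsequence_property_equiv HS HN' HNN').
  exact: (bfs_subsequence_property HS HN' Hc' HI HL).
- case=> [[C [C_gt0 HC]] Hsub].
  exact: (exists_equivalent_bfs_norm HS HN Hc Hsub C_gt0 HC).
Qed.
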